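(* Let $G=(V,E)$ be a node-symmetric graph and let $(q_J)_{J\in\{0,1\}^V}$ be a probability distribution on channel state vectors such that $q_J=q_K$ whenever the induced subgraphs $G_J$ and $G_K$ are isomorphic. Then the probability that the channel state is $1$ at node $a$, namely $\sum_{J:J_a=1}q_J$, is the same for all $a\in V$.
   Context: A channel state vector $J\in\{0,1\}^V$ gives the state ($1$ = available, $0$ = unavailable) of a primary's channel at each node; $G_J$ is the subgraph of $G$ induced by $\{a\in V: J_a=1\}$. $G$ is node symmetric (vertex transitive) if for all $a,b\in V$ there is an automorphism $F$ of $G$ (a bijection $V\to V$ preserving adjacency in both directions) with $F(a)=b$. Graphs $H,H'$ are isomorphic if there is a bijection between their vertex sets preserving adjacency in both directions. *)

From mathcomp Require Import all_boot all_order all_algebra.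
Set Implicit Arguments. Unset Strict Implicit. Unset Printing Implicit Defensive.
Import Order.TTheory GRing.Theory Num.Theory.

Definition simple_graph (V : finType) (e : rel V) : Prop :=
  symmetric e /\ irreflexive e.

Definition is_automorphism (V : finType) (e : rel V) (F : V -> V) : Prop :=
  bijective F /\ forall a b, e a b = e (F a) (F b).

Definition node_symmetric (V : finType) (e : rel V) : Prop :=
  forall a b : V, exists F : V -> V, is_automorphism e F /\ F a = b.

(* Channel state vectors J in {0,1}^V (true = available). *)
Definition state (V : finType) := {ffun V -> bool}.

Definition induced_vtx (V : finType) (J : state V) := {a : V | J a}.

Definition induced_iso (V : finType) (e : rel V) (J K : state V) : Prop :=
  exists f : induced_vtx J -> induced_vtx K,
    bijective f /\ forall x y, e (val x) (val y) = e (val (f x)) (val (f y)).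

From mathcomp Require Import all_boot all_order all_algebra.
Import Order.TTheory GRing.Theory Num.Theory.
Set Implicit Arguments. Unset Strict Implicit. Unset Printing Implicit Defensive.
Local Open Scope ring_scope.

(* An automorphism F of G moves every channel state J to the state J o F^-1,
   whose induced subgraph is isomorphic to G_J via F; reindexing the sum over
   states along this bijection sends the event [J a] to the event [J (F a)].
   Node symmetry supplies an F with F a = b. *)

Section AutomorphismTransport.

Variables (V : finType) (e : rel V).

Definition state_pull (G : V -> V) (J : state V) : state V := [ffun x => J (G x)].

Lemma state_pullK (F G : V -> V) : cancel F G -> cancel (state_pull G) (state_pull F).
Proof. by move=> FG J; apply/ffunP=> x; rewrite !ffunE FG. Qed.

Lemma induced_iso_state_pull (F G : V -> V) (J : state V) :
  (forall a b, e a b = e (F a) (F b)) -> cancel F G -> cancel G F ->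
  induced_iso e J (state_pull G J).
Proof.
move=> eF FG GF.
have inJG (x : induced_vtx J) : state_pull G J (F (val x)).
  by rewrite ffunE FG; exact: valP.
have inJ (y : induced_vtx (state_pull G J)) : J (G (val y)).
  by have := valP y; rewrite ffunE.
exists (fun x => exist (fun v => state_pull G J v) _ (inJG x)).
split; last by move=> x y; exact: eF.
exists (fun y => exist (fun v => J v) _ (inJ y)).
- by move=> x; apply: val_inj; rewrite /= FG.
- by move=> y; apply: val_inj; rewrite /= GF.
Qed.

Lemma sum_states_automorphism (R : nmodType) (q : state V -> R) (F : V -> V) :
  is_automorphism e F ->
  (forall J K : state V, induced_iso e J K -> q J = q K) ->
  forall a : V, \sum_(J : state V | J a) q J = \sum_(J : state V | J (F a)) q J.
Proof.
move=> [[G FG GF] eF] q_iso a.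
rewrite [RHS](reindex (state_pull G)); last first.
  by exists (state_pull F) => J _; [exact: state_pullK | exact: state_pullK].
apply: eq_big => [J|J _]; first by rewrite ffunE FG.
exact/q_iso/induced_iso_state_pull.
Qed.

End AutomorphismTransport.

Theorem lemma11 (R : realFieldType) (V : finType) (e : rel V)
  (q : state V -> R) :
  simple_graph e ->
  node_symmetric e ->
  (forall J, 0 <= q J) ->
  \sum_(J : state V) q J = 1 ->
  (forall J K : state V, induced_iso e J K -> q J = q K) ->
  forall a b : V,
    \sum_(J : state V | J a) q J = \sum_(J : state V | J b) q J.
Proof.
move=> _ node_sym _ _ q_iso a b.
have [F [autF <-]] := node_sym a b.
exact: sum_states_automorphism autF q_iso a.
Qed.
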